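(* Let $k\ge 2$ be an integer, and let $G$ be the graph obtained from two disjoint copies of the helm $H_4$ and a path $u_1u_2\cdots u_k$ (of length $k-1$) by identifying $u_1$ with the apex vertex of the first copy of $H_4$ and $u_k$ with the apex vertex of the second copy of $H_4$. Then $G$ admits a signed product cordial labeling.
   Context: A graph $G$ is signed product cordial if there is a vertex labeling $\alpha: V(G)\to\{1,-1\}$ such that, with the induced edge labeling $\alpha^*(uv)=\alpha(u)\alpha(v)$, we have $|v_\alpha(-1)-v_\alpha(1)|\le 1$ and $|e_{\alpha^*}(-1)-e_{\alpha^*}(1)|\le 1$. Here $v_\alpha(x)$ is the number of vertices labeled $x$ and $e_{\alpha^*}(x)$ is the number of edges labeled $x$; such an $\alpha$ is called a signed product cordial labeling. The wheel $W_n$ consists of a cycle $C_n$ (the rim) together with an apex vertex adjacent to every rim vertex. The helm $H_n$ ($n\ge 3$) is obtained from $W_n$ by attaching a pendant edge at each rim vertex. Thus $H_4$ has an apex $v_0$, rim vertices $v_1,\dots,v_4$ forming a $4$-cycle, each adjacent to $v_0$, and pendant vertices $v_1',\dots,v_4'$ with $v_i'$ adjacent only to $v_i$. *)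

From mathcomp Require Import all_boot all_order all_algebra.
Set Implicit Arguments. Unset Strict Implicit. Unset Printing Implicit Defensive.
Import GRing.Theory Num.Theory.
Local Open Scope ring_scope.

Definition simple_graph (T : finType) (e : rel T) : Prop :=
  symmetric e /\ irreflexive e.

Definition edges (T : finType) (e : rel T) : {set {set T}} :=
  [set [set x; y] | x in T, y in T & e x y].

Definition is_sign (z : int) : bool := (z == 1) || (z == -1).

Definition edge_label (T : finType) (alpha : T -> int) (E : {set T}) : int :=
  \prod_(x in E) alpha x.

Definition signed_product_cordial_labeling (T : finType) (e : rel T)
    (alpha : T -> int) : Prop :=
  (forall x, is_sign (alpha x)) /\
  `| (#|[set x | alpha x == -1]|%:Z) - (#|[set x | alpha x == 1]|%:Z) | <= 1 /\
  `| (#|[set E in edges e | edge_label alpha E == -1]|%:Z)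
     - (#|[set E in edges e | edge_label alpha E == 1]|%:Z) | <= 1.

Definition signed_product_cordial (T : finType) (e : rel T) : Prop :=
  exists alpha : T -> int, signed_product_cordial_labeling e alpha.

(* ---- The helm H_4 on 'I_9:  0 = apex v0, 1..4 = rim v1..v4 (cycle),
        5..8 = pendants v1'..v4' with v_i' adjacent to v_i. ---- *)
Definition helm4_adj (i j : nat) : bool :=
  ((i == 0%N) && (1 <= j)%N && (j <= 4)%N)
  || ((1 <= i)%N && (i <= 3)%N && (j == i.+1))
  || ((i == 4%N) && (j == 1%N))
  || ((1 <= i)%N && (i <= 4)%N && (j == i + 4)%N).

Definition helm4_rel (i j : 'I_9) : bool :=
  helm4_adj i j || helm4_adj j i.

(* ---- The graph G of the theorem, for k >= 2.
   Vertices: inl (inl i) = vertex i of the first H_4,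
             inl (inr i) = vertex i of the second H_4,
             inr m       = path vertex u_{m+2}  (m < k-2), i.e. u_2..u_{k-1}.
   u_1 is identified with the apex of copy 1, u_k with the apex of copy 2. ---- *)
Definition GV (k : nat) : finType := (('I_9 + 'I_9) + 'I_(k - 2))%type.

(* index of a vertex on the path u_1 ... u_k (1-based), or 0 if not on it *)
Definition path_pos (k : nat) (x : GV k) : nat :=
  match x with
  | inl (inl i) => if nat_of_ord i == 0%N then 1%N else 0%N
  | inl (inr i) => if nat_of_ord i == 0%N then k else 0%N
  | inr m => (nat_of_ord m + 2)%N
  end.

Definition G_rel (k : nat) (x y : GV k) : bool :=
  match x, y with
  | inl (inl i), inl (inl j) => helm4_rel i j
  | inl (inr i), inl (inr j) => helm4_rel i j
  | _, _ => false
  end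
  || [&& path_pos x != 0%N, path_pos y != 0%N &
         ((path_pos y == (path_pos x).+1) || (path_pos x == (path_pos y).+1))].

From mathcomp Require Import all_boot all_order all_algebra zify ring.
Set Implicit Arguments. Unset Strict Implicit. Unset Printing Implicit Defensive.
Import GRing.Theory Num.Theory.
Local Open Scope ring_scope.

(* For a {1,-1}-labeling the difference of the two counts is minus the sum of
   the labels, so it suffices to make both the vertex label sum and the edge
   label sum at most 1 in absolute value.  Label the path u_1 ... u_k by the
   4-periodic pattern +, -, -, +, +, -, -, ...: consecutive products alternate
   -1, +1 and all partial sums lie in {-1, 0, 1}.  In each helm label the rim
   v_1 .. v_4 by +, +, -, - and the pendants v_1' .. v_4' by +, -, +, -: the eight
   non-apex labels cancel, and so do the spoke, rim and pendant edge labels,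
   whatever the apex label is.  Hence both sums are those of the path alone.
   The edge sum is computed as half the sum of alpha x * alpha y over ordered
   adjacent pairs (x, y), which splits over the helm and path edges. *)

Lemma is_sign_mul (a b : int) : is_sign a -> is_sign b -> is_sign (a * b).
Proof. by move=> /orP[]/eqP-> /orP[]/eqP->. Qed.

Lemma is_sign_edge_label (T : finType) (w : T -> int) (E : {set T}) :
  (forall x, is_sign (w x)) -> is_sign (edge_label w E).
Proof. by move=> w_sign; apply: (big_ind is_sign) => //; exact: is_sign_mul. Qed.

Lemma card_sign_diff (I : finType) (A : {set I}) (w : I -> int) :
  (forall i, is_sign (w i)) ->
  #|[set i in A | w i == -1]|%:Z - #|[set i in A | w i == 1]|%:Z
    = - \sum_(i in A) w i.
Proof.
move=> w_sign.
have card_indicator (P : pred I) :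
    #|[set i in A | P i]|%:Z = \sum_(i in A) (P i)%:R.
  rewrite (eq_bigr (fun i => if P i then 1 else 0)); last first.
    by move=> i _; case: (P i).
  rewrite -big_mkcondr /= sumr_const -natz.
  by congr (_%:R); apply: eq_card => i; rewrite inE.
rewrite !card_indicator -sumrB -sumrN; apply: eq_bigr => i _.
by case/orP: (w_sign i) => /eqP->.
Qed.

Lemma signed_product_cordial_labeling_sums (T : finType) (e : rel T)
    (alpha : T -> int) :
  (forall x, is_sign (alpha x)) ->
  `|\sum_x alpha x| <= 1 -> `|\sum_(E in edges e) edge_label alpha E| <= 1 ->
  signed_product_cordial_labeling e alpha.
Proof.
move=> alpha_sign vertex_sum edge_sum; split=> //; split.
  have in_setT (c : int) :
      [set x | alpha x == c] = [set x in [set: T] | alpha x == c].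
    by apply/setP => x; rewrite !inE.
  rewrite !in_setT card_sign_diff // normrN.
  by rewrite (eq_bigl xpredT) // => x; rewrite inE.
by rewrite card_sign_diff ?normrN // => E; exact: is_sign_edge_label.
Qed.

Definition pair_weight (T : finType) (e : rel T) (w : T -> int) : int :=
  \sum_x \sum_y (if e x y then w x * w y else 0).

Lemma pair_weight_disjoint_union (T : finType) (e1 e2 : rel T) (w : T -> int) :
  (forall x y, ~~ (e1 x y && e2 x y)) ->
  pair_weight (fun x y => e1 x y || e2 x y) w
    = pair_weight e1 w + pair_weight e2 w.
Proof.
move=> disj; rewrite -big_split; apply: eq_bigr => x _.
rewrite -big_split; apply: eq_bigr => y _.
by move: (disj x y); case: (e1 x y); case: (e2 x y); rewrite /= ?addr0 ?add0r.
Qed.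

Lemma edge_label2 (T : finType) (w : T -> int) (x y : T) :
  x != y -> edge_label w [set x; y] = w x * w y.
Proof. by move=> xy; rewrite /edge_label big_setU1 ?big_set1 // inE. Qed.

Section DoubleCounting.
Variables (T : finType) (e : rel T).
Hypothesis e_simple : simple_graph e.

Lemma simple_graph_neq x y : e x y -> x != y.
Proof.
by case: e_simple => _ e_irr exy; apply/eqP => xy; rewrite xy e_irr in exy.
Qed.

Lemma ordered_pairs_of_edge x y : e x y ->
  [pred p : T * T | e p.1 p.2 & [set p.1; p.2] == [set x; y]]
    =i [set (x, y); (y, x)].
Proof.
case: e_simple => e_sym e_irr exy [a b]; rewrite !inE /=.
apply/andP/orP => [[eab /eqP Eab] | [] /eqP [-> ->]]; last 2 first.
- by rewrite exy eqxx.
- by rewrite e_sym exy setUC eqxx.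
have: a \in [set x; y] /\ b \in [set x; y].
  by rewrite -Eab !inE !eqxx orbT.
rewrite !inE => -[/orP[]/eqP ea /orP[]/eqP eb]; subst a b.
all: by [left | right | rewrite e_irr in eab].
Qed.

Lemma pair_weight_edges (w : T -> int) :
  pair_weight e w = 2 * \sum_(E in edges e) edge_label w E.
Proof.
rewrite /pair_weight pair_big /= -big_mkcondr /=.
rewrite (eq_bigr (fun p => edge_label w [set p.1; p.2])); last first.
  by move=> p ep; rewrite edge_label2 // simple_graph_neq.
rewrite (partition_big (fun p => [set p.1; p.2]) (mem (edges e))) /=; last first.
  by move=> p ep; apply/imset2P; exists p.1 p.2; rewrite ?inE.
rewrite big_distrr /=; apply: eq_bigr => E /imset2P[x y _]; rewrite inE => exy ->.
rewrite (eq_bigr (fun=> edge_label w [set x; y])); last first.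
  by move=> p /andP[_ /eqP->].
rewrite (eq_bigl _ _ (ordered_pairs_of_edge exy)) sumr_const cards2 mulr_natl.
by rewrite xpair_eqE negb_and simple_graph_neq.
Qed.

End DoubleCounting.

Lemma sum_succ_pairs (R : comPzRingType) (F : nat -> R) (n : nat) :
  \sum_(1 <= p < n.+1) \sum_(1 <= q < n.+1) (if q == p.+1 then F p * F q else 0)
    = \sum_(1 <= p < n) F p * F p.+1.
Proof.
rewrite (big_nat_widen 1 n n.+1) // big_mkcondr /=; apply: eq_big_nat => p _.
by rewrite -big_mkcondr big_nat1_eq ltnS.
Qed.

Lemma sum_adjacent_pairs (R : comPzRingType) (F : nat -> R) (n : nat) :
  \sum_(1 <= p < n.+1) \sum_(1 <= q < n.+1)
     (if (q == p.+1) || (p == q.+1) then F p * F q else 0)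
    = (\sum_(1 <= p < n) F p * F p.+1) *+ 2.
Proof.
have split_or (p q : nat) : (if (q == p.+1) || (p == q.+1) then F p * F q else 0)
    = (if q == p.+1 then F p * F q else 0) + (if p == q.+1 then F q * F p else 0).
  case: eqP => [->|_]; last by rewrite add0r mulrC.
  by rewrite ltn_eqF ?addr0.
under eq_bigr do under eq_bigr do rewrite split_or.
under eq_bigr do rewrite big_split /=.
by rewrite big_split /= [X in _ + X]exchange_big_nat /= sum_succ_pairs mulr2n.
Qed.

Definition path_sign (p : nat) : int := if odd p./2 then -1 else 1.

Lemma is_sign_path_sign p : is_sign (path_sign p).
Proof. by rewrite /path_sign; case: ifP. Qed.

Lemma path_sign_mulS p : path_sign p * path_sign p.+1 = if odd p then -1 else 1.
Proof.
by rewrite /path_sign /= uphalf_half oddD; case: (odd p); case: (odd p./2).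
Qed.

Lemma sum_path_sign n :
  \sum_(1 <= p < n.+1) path_sign p = if odd n then path_sign n else 0.
Proof.
elim: n => [|n IHn]; first by rewrite big_geq.
rewrite big_nat_recr //= IHn /path_sign /= uphalf_half oddD.
by case: (odd n); case: (odd n./2).
Qed.

Lemma sum_path_sign_mulS n :
  \sum_(1 <= p < n.+1) path_sign p * path_sign p.+1 = - (odd n)%:R.
Proof.
elim: n => [|n IHn]; first by rewrite big_geq.
by rewrite big_nat_recr //= IHn path_sign_mulS /=; case: (odd n).
Qed.

Definition helm4_sign (i : nat) : int :=
  match i with 1%N | 2%N | 5%N | 7%N => 1 | _ => -1 end.

Lemma is_sign_helm4_sign i : is_sign (helm4_sign i).
Proof. by do 8 case: i => [|i] //. Qed.

Definition helm4_labeling (c : int) (i : 'I_9) : int :=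
  if nat_of_ord i == 0%N then c else helm4_sign i.

Lemma is_sign_helm4_labeling c i : is_sign c -> is_sign (helm4_labeling c i).
Proof.
by rewrite /helm4_labeling; case: ifP => // _ _; exact: is_sign_helm4_sign.
Qed.

Lemma sum_helm4_labeling c : \sum_i helm4_labeling c i = c.
Proof. by rewrite !big_ord_recr big_ord0 /= /helm4_labeling /=; ring. Qed.

Lemma pair_weight_helm4 c : pair_weight helm4_rel (helm4_labeling c) = 0.
Proof.
by rewrite /pair_weight !big_ord_recr !big_ord0 /= /helm4_labeling /=; ring.
Qed.

Lemma simple_graph_helm4 : simple_graph helm4_rel.
Proof.
split=> [i j | i]; rewrite /helm4_rel; first by rewrite orbC.
by rewrite orbb /helm4_adj; lia.
Qed.

Lemma sum_path_range (V : nmodType) (k : nat) (g : nat -> V) : (2 <= k)%N ->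
  \sum_(1 <= p < k.+1) g p = g 1%N + g k + \sum_(m < k - 2) g (m + 2)%N.
Proof.
move=> hk; rewrite big_ltn ?ltnS 1?ltnW // big_nat_recr //=.
by rewrite (big_addn 0 k 2) big_mkord addrA addrAC.
Qed.

Lemma sum_path_vertices (V : nmodType) (k : nat) (g : nat -> V) : (2 <= k)%N ->
  \sum_(x : GV k | path_pos x != 0%N) g (path_pos x) = \sum_(1 <= p < k.+1) g p.
Proof.
move=> hk; rewrite sum_path_range // big_mkcond !big_sumType /= !big_ord_recl /=.
rewrite big_ord0 !addr0 -lt0n (ltnW hk); congr (_ + _).
by apply: eq_bigr => m _; rewrite addn2.
Qed.

Definition G_labeling (k : nat) (x : GV k) : int :=
  match x with
  | inl (inl i) => helm4_labeling (path_sign 1) i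
  | inl (inr i) => helm4_labeling (path_sign k) i
  | inr m => path_sign (m + 2)
  end.

Lemma is_sign_G_labeling k (x : GV k) : is_sign (G_labeling x).
Proof.
by case: x => [[i|i]|m]; rewrite /= ?is_sign_helm4_labeling ?is_sign_path_sign.
Qed.

Lemma G_labeling_path k (x : GV k) :
  path_pos x != 0%N -> G_labeling x = path_sign (path_pos x).
Proof.
by case: x => [[i|i]|m] //=; rewrite /helm4_labeling; case: (nat_of_ord i == 0%N).
Qed.

Lemma sum_G_labeling k : (2 <= k)%N ->
  \sum_(x : GV k) G_labeling x = \sum_(1 <= p < k.+1) path_sign p.
Proof.
by move=> hk; rewrite sum_path_range // !big_sumType /= !sum_helm4_labeling.
Qed.

Definition G_helm_rel (k : nat) (x y : GV k) : bool :=
  match x, y with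
  | inl (inl i), inl (inl j) | inl (inr i), inl (inr j) => helm4_rel i j
  | _, _ => false
  end.

Definition G_path_rel (k : nat) (x y : GV k) : bool :=
  [&& path_pos x != 0%N, path_pos y != 0%N &
      (path_pos y == (path_pos x).+1) || (path_pos x == (path_pos y).+1)].

Lemma G_relE k : @G_rel k = (fun x y => G_helm_rel x y || G_path_rel x y).
Proof. by []. Qed.

Lemma G_helm_path_disjoint k (x y : GV k) : ~~ (G_helm_rel x y && G_path_rel x y).
Proof.
case: x => [[i|i]|m]; case: y => [[j|j]|m'] //=; rewrite /G_path_rel /=.
all: case: (nat_of_ord i == 0%N); case: (nat_of_ord j == 0%N) => //=.
all: by rewrite ?andbF //=; lia.
Qed.

Lemma simple_graph_G k : simple_graph (@G_rel k).
Proof.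
have [helm_sym helm_irr] := simple_graph_helm4.
rewrite G_relE; split=> [x y | x].
  congr (_ || _); first by case: x => [[i|i]|m]; case: y => [[j|j]|m'] //=.
  by rewrite /G_path_rel andbCA orbC.
rewrite /G_path_rel (ltn_eqF (ltnSn _)) /= !andbF orbF.
by case: x => [[i|i]|m] //=.
Qed.

Lemma pair_weight_G_helm k : pair_weight (@G_helm_rel k) (@G_labeling k) = 0.
Proof.
rewrite /pair_weight !big_sumType /=.
under [X in X + _ + _]eq_bigr do rewrite !big_sumType /= !big1_eq !addr0.
under [X in _ + X + _]eq_bigr do rewrite !big_sumType /= !big1_eq add0r addr0.
rewrite !big1_eq addr0 -/(pair_weight helm4_rel (helm4_labeling (path_sign 1))).
rewrite -/(pair_weight helm4_rel (helm4_labeling (path_sign k))).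
by rewrite !pair_weight_helm4 addr0.
Qed.

Lemma pair_weight_G_path k : (2 <= k)%N ->
  pair_weight (@G_path_rel k) (@G_labeling k)
    = (\sum_(1 <= p < k) path_sign p * path_sign p.+1) *+ 2.
Proof.
move=> hk; rewrite -sum_adjacent_pairs -sum_path_vertices //.
under eq_bigr => x _ do rewrite -(sum_path_vertices _ hk).
rewrite /pair_weight [RHS]big_mkcond; apply: eq_bigr => x _; rewrite /G_path_rel.
have [-> | px] /= := eqVneq (path_pos x) 0%N; first by rewrite big1.
rewrite [RHS]big_mkcond; apply: eq_bigr => y _.
have [-> | py] //= := eqVneq (path_pos y) 0%N.
by rewrite !G_labeling_path.
Qed.

Lemma sum_edge_label_G k : (2 <= k)%N ->
  \sum_(E in edges (@G_rel k)) edge_label (@G_labeling k) E = - (odd k.-1)%:R.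
Proof.
move=> hk; apply: (@mulfI _ 2) => //=.
rewrite -pair_weight_edges; last exact: simple_graph_G.
rewrite G_relE pair_weight_disjoint_union; last exact: G_helm_path_disjoint.
rewrite pair_weight_G_helm pair_weight_G_path // add0r -mulr_natl.
by rewrite -{1}(prednK (ltnW hk)) sum_path_sign_mulS.
Qed.

Theorem theorem2p4 (k : nat) (hk : (2 <= k)%N) :
  signed_product_cordial (@G_rel k).
Proof.
exists (@G_labeling k); apply: signed_product_cordial_labeling_sums.
- exact: is_sign_G_labeling.
- rewrite sum_G_labeling // sum_path_sign; case: (odd k) => //.
  by case/orP: (is_sign_path_sign k) => /eqP->.
- by rewrite sum_edge_label_G // normrN; case: (odd k.-1).
Qed.
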